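(* Let $(\Gamma,\tau)$ be a $z$-oriented triangulation of a connected closed $2$-dimensional surface, with transition digraph $\Gamma_{\tau}$ and Markov chain $\mathcal{X}_{\tau}$. The following are equivalent: (1) $\mathcal{X}_{\tau}$ is aperiodic; (2) $\mathcal{X}_{\tau}$ is ergodic; (3) there exists a closed directed walk in $\Gamma_{\tau}$ whose length is not divisible by $3$.
   Context: A triangulation $\Gamma$ of a connected closed surface $M$ (not necessarily orientable) is a closed $2$-cell embedding of a connected finite simple graph in $M$ all of whose faces are triangles. Two edges are adjacent if distinct and in a common face; two faces are adjacent if distinct and their intersection is an edge. A zigzag is a sequence of edges $(e_i)_{i\in\mathbb{N}}$ such that for every $i$: $e_i,e_{i+1}$ are adjacent, the faces containing $e_i,e_{i+1}$ and $e_{i+1},e_{i+2}$ are adjacent, and $e_i,e_{i+2}$ are disjoint; it is a cyclic sequence, equivalently a cyclic vertex sequence $v_1,\dots,v_n$ with $e_i=v_iv_{i+1}$, traversing $e_i$ from $v_i$ to $v_{i+1}$. A $z$-orientation $\tau$ is a set of zigzags containing exactly one of $Z,Z^{-1}$ (reversed zigzag) for every zigzag $Z$. Every edge is traversed exactly twice in total by zigzags of $\tau$; it is of type I if in opposite directions, of type II if in the same direction (then regarded as directed that way). Each face has either two type I edges and one type II edge (type I) or three type II edges forming a directed cycle (type II). For $v\in V=\{v_1,\dots,v_n\}$ let $d(v)$ be the number of type I edges at $v$ plus twice the number of type II edges directed out of $v$. Set $p_{ij}=1/d(v_i)$ if $v_iv_j$ is a type I edge, $p_{ij}=2/d(v_i)$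 if $v_iv_j$ is a type II edge directed from $v_i$ to $v_j$, $p_{ij}=0$ otherwise. $\Gamma_{\tau}$ is the digraph on $V$ with edge $v_i\to v_j$ iff $p_{ij}>0$, and $\mathcal{X}_{\tau}$ is the time-homogeneous Markov chain on $V$ with transition matrix $[p_{ij}]$. Ergodic means irreducible and aperiodic. The length of a walk counts edges with multiplicity. *)

From mathcomp Require Import all_boot all_order all_algebra.
Set Implicit Arguments. Unset Strict Implicit. Unset Printing Implicit Defensive.
Import Order.TTheory GRing.Theory Num.Theory.

Section Triangulation.
Variable V : finType.
Variable F : {set {set V}}. (* the faces, each given by its set of 3 vertices *)

Definition is_edge (e : {set V}) : bool :=
  (#|e| == 2) && [exists f in F, e \subset f].

Definition adj (a b : V) : bool := is_edge [set a; b].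

Definition link_rel (v : V) (a b : V) : bool := [set v; a; b] \in F.

(* (V, F) is a triangulation of a connected closed surface:
   pure 2-dimensional simplicial complex, every vertex lies on a face,
   every edge lies on exactly two faces, the link of every vertex is
   connected (hence a single cycle), and the graph is connected. *)
Definition triangulation : Prop :=
  [/\ F != set0 /\ (forall f, f \in F -> #|f| = 3),
      forall x : V, (exists2 f, f \in F & x \in f),
      forall e, is_edge e -> #|[set f in F | e \subset f]| = 2,
      forall v u w, adj v u -> adj v w -> connect (link_rel v) u w
    & forall u w, connect adj u w].

Definition cyc (x0 : V) (s : seq V) (i : nat) : V := nth x0 s (i %% size s).

Definition zedge (x0 : V) (s : seq V) (i : nat) : {set V} :=
  [set cyc x0 s i; cyc x0 s i.+1].

Definition adjacent_edges (e e' : {set V}) : Prop :=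
  e != e' /\ exists2 f, f \in F & (e \subset f) && (e' \subset f).

Definition adjacent_faces (f g : {set V}) : Prop :=
  f != g /\ is_edge (f :&: g).

(* A zigzag, given as a (primitive) cyclic vertex sequence v_1 ... v_n,
   with e_i = v_i v_{i+1} traversed from v_i to v_{i+1}. *)
Definition is_zigzag (s : seq V) : Prop :=
  [/\ 0 < size s /\ (forall x0 i, is_edge (zedge x0 s i)),
      forall x0 i, adjacent_edges (zedge x0 s i) (zedge x0 s i.+1),
      forall x0 i f g, f \in F -> g \in F ->
        zedge x0 s i \subset f -> zedge x0 s i.+1 \subset f ->
        zedge x0 s i.+1 \subset g -> zedge x0 s i.+2 \subset g ->
        adjacent_faces f g,
      forall x0 i, [disjoint zedge x0 s i & zedge x0 s i.+2]
    & forall k, 0 < k < size s -> rot k s != s].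

Definition same_zz (s t : seq V) : Prop := exists k, rot k s = t.

Definition in_zset (tau : seq (seq V)) (s : seq V) : Prop :=
  exists2 t, t \in tau & same_zz t s.

(* z-orientation: a set of zigzags containing exactly one of Z, Z^{-1}
   for every zigzag Z (the reversed zigzag of v_1..v_n is v_n..v_1). *)
Definition z_orientation (tau : seq (seq V)) : Prop :=
  [/\ forall s, s \in tau -> is_zigzag s,
      uniq tau,
      forall s t, s \in tau -> t \in tau -> same_zz s t -> s = t
    & forall s, is_zigzag s ->
        (in_zset tau s \/ in_zset tau (rev s)) /\
        (in_zset tau s -> in_zset tau (rev s) -> same_zz s (rev s))].

Definition trav (tau : seq (seq V)) (u v : V) : nat :=
  \sum_(s <- tau) count (pred1 (u, v)) (zip s (rot 1 s)).

Definition typeI (tau : seq (seq V)) (u v : V) : bool :=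
  [&& is_edge [set u; v], 0 < trav tau u v & 0 < trav tau v u].

Definition typeII (tau : seq (seq V)) (u v : V) : bool :=
  [&& is_edge [set u; v], 0 < trav tau u v & trav tau v u == 0].

Definition zdeg (tau : seq (seq V)) (v : V) : nat :=
  #|[set u | typeI tau v u]| + 2 * #|[set u | typeII tau v u]|.

Local Open Scope ring_scope.

Definition ptrans (tau : seq (seq V)) (i j : V) : rat :=
  if typeI tau i j then 1 / (zdeg tau i)%:R
  else if typeII tau i j then 2 / (zdeg tau i)%:R
  else 0.

End Triangulation.

Local Open Scope ring_scope.

Section Markov.
Variable S : finType.
Variable P : S -> S -> rat.

Fixpoint nstep (n : nat) (i j : S) : rat :=
  match n with
  | O => (i == j)%:R
  | n'.+1 => \sum_(l : S) nstep n' i l * P l j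
  end.

Definition irreducible : Prop := forall i j, exists n, 0 < nstep n i j.

(* d is the period of i: d = gcd {n >= 1 | (P^n)_ii > 0} *)
Definition is_period (i : S) (d : nat) : Prop :=
  (forall n, (0 < n)%N -> 0 < nstep n i i -> (d %| n)%N) /\
  (forall d', (forall n, (0 < n)%N -> 0 < nstep n i i -> (d' %| n)%N) ->
     (d' %| d)%N).

Definition aperiodic : Prop := forall i, is_period i 1.

Definition ergodic : Prop := irreducible /\ aperiodic.

End Markov.

From mathcomp Require Import all_boot all_order all_algebra zify.
From Stdlib Require Import Classical.
Set Implicit Arguments. Unset Strict Implicit. Unset Printing Implicit Defensive.
Import Order.TTheory GRing.Theory Num.Theory.

(* The arcs of Gamma_tau are exactly the edges traversed by a zigzag of tau, in
   the direction of traversal. Going on around that zigzag leads back, so every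
   arc can be reversed by a walk. Every face {a, b, c} lies on the zigzag
   through a, b, c, and tau traverses it one way or the other: hence adjacent
   vertices communicate, Gamma_tau is strongly connected (the chain is
   irreducible), and the orientations of the three corners of a face always
   contain a directed triangle. With a closed walk of length 3 at hand, the
   period at every state divides both 3 and the length of any closed walk,
   which gives (3) => (1); conversely an aperiodic chain cannot have all its
   return times divisible by 3. *)

Section Walks.
Variables (T : finType) (e : rel T).

Definition walk (n : nat) (u v : T) : Prop :=
  exists p, [/\ path e u p, last u p = v & size p = n].

Lemma walk_cat m n u v w : walk m u v -> walk n v w -> walk (m + n) u w.
Proof.
move=> [p [pu pv <-]] [q [qv qw <-]]; exists (p ++ q).
by rewrite cat_path last_cat pu pv qv qw size_cat.
Qed.

Lemma connect_walk u v : connect e u v -> exists n, walk n u v.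
Proof. by case/connectP=> p pu ->; exists (size p), p. Qed.

End Walks.

Section MarkovChain.
Variables (S : finType) (P : S -> S -> rat).
Local Open Scope ring_scope.

Definition trans_rel : rel S := fun i j => 0 < P i j.

Hypothesis P_ge0 : forall i j, 0 <= P i j.

Lemma nstep_ge0 n i j : 0 <= nstep P n i j.
Proof.
elim: n j => [|n IHn] j /=; first exact: ler0n.
by apply: sumr_ge0 => l _; apply: mulr_ge0.
Qed.

Lemma nstep_gt0P n i j : 0 < nstep P n i j <-> walk trans_rel n i j.
Proof.
elim: n j => [|n IHn] j /=.
  rewrite ltr0n lt0b; split=> [/eqP <-|]; first by exists [::].
  by case=> -[|k p] [_ /= <- //]; rewrite eqxx.
split=> [|[p []]].
  rewrite lt_def psumr_eq0 => [/andP[/allPn[l _ nPl] _]|l _]; last first.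
    by rewrite mulr_ge0 ?nstep_ge0.
  have [nl Pl] : 0 < nstep P n i l /\ 0 < P l j.
    by move: nPl; rewrite mulf_eq0 negb_or !lt0r nstep_ge0 P_ge0 !andbT => /andP.
  have [p [ip pl <-]] := (IHn l).1 nl.
  by exists (rcons p j); rewrite rcons_path last_rcons size_rcons ip pl.
case/lastP: p => [//|p k]; rewrite rcons_path last_rcons size_rcons.
move=> /andP[ip Pk] <- [np].
rewrite (bigD1 (last i p)) //=; apply: ltr_wpDr.
  by apply: sumr_ge0 => l _; rewrite mulr_ge0 ?nstep_ge0.
by apply: mulr_gt0 => //; apply/IHn; exists p.
Qed.

Lemma aperiodic_cycle_ndvd k i : aperiodic P -> k != 1%N ->
  exists n, walk trans_rel n i i /\ ~~ (k %| n)%N.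
Proof.
move=> /(_ i)[_ /(_ k) k_dvd1]; rewrite -dvdn1 => /negP k_ndvd1.
apply: NNPP => no_cycle; apply/k_ndvd1/k_dvd1 => n _ /nstep_gt0P i_n_i.
by apply/negPn/negP => k_n; apply: no_cycle; exists n.
Qed.

Hypothesis trans_connect : forall i j, connect trans_rel i j.

Lemma irreducible_connect : irreducible P.
Proof.
by move=> i j; have [n /nstep_gt0P] := connect_walk (trans_connect i j); exists n.
Qed.

Lemma aperiodic_coprime_cycles x y m n :
  walk trans_rel m x x -> walk trans_rel n y y -> coprime m n -> aperiodic P.
Proof.
move=> wx wy cmn i; split=> [n' _ _|d d_ret]; first exact: dvd1n.
have [l1 ix] := connect_walk (trans_connect i x).
have [l2 xi] := connect_walk (trans_connect x i).
have [l3 iy] := connect_walk (trans_connect i y).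
have [l4 yi] := connect_walk (trans_connect y i).
have through_x k : walk trans_rel k x x -> walk trans_rel (l1 + k + l2) i i.
  by move=> wk; apply: walk_cat xi; apply: walk_cat ix wk.
have through_y k : walk trans_rel k y y -> walk trans_rel (l3 + k + l4) i i.
  by move=> wk; apply: walk_cat yi; apply: walk_cat iy wk.
have mn_gt0 : (0 < m + n)%N.
  by move: cmn; rewrite /coprime; case: m n {wx wy through_x through_y} => [|?] [|?].
(* Returns to i looping once or twice at x and at y: times c, c + m and c + n. *)
pose c := (l1 + m + l2 + (l3 + n + l4))%N.
have ret_dvd k : walk trans_rel k i i -> (c <= k)%N -> (d %| k)%N.
  by move=> ik ck; apply: d_ret; [rewrite /c in ck; lia | apply/nstep_gt0P].
have d_c : (d %| c)%N by apply: ret_dvd (walk_cat (through_x _ wx) (through_y _ wy)) _.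
have d_m : (d %| c + m)%N.
  apply: ret_dvd; last exact: leq_addr.
  have -> : (c + m = l1 + (m + m) + l2 + (l3 + n + l4))%N by rewrite /c; lia.
  exact: walk_cat (through_x _ (walk_cat wx wx)) (through_y _ wy).
have d_n : (d %| c + n)%N.
  apply: ret_dvd; last exact: leq_addr.
  have -> : (c + n = l1 + m + l2 + (l3 + (n + n) + l4))%N by rewrite /c; lia.
  exact: walk_cat (through_x _ wx) (through_y _ (walk_cat wy wy)).
by rewrite -(eqP cmn) dvdn_gcd -(dvdn_addr _ d_c) d_m -(dvdn_addr _ d_c) d_n.
Qed.

End MarkovChain.

Lemma zip_rot (S T : Type) k (s : seq S) (t : seq T) :
  size s = size t -> zip (rot k s) (rot k t) = rot k (zip s t).
Proof.
move=> st; elim: k => [|k IHk]; first by rewrite !rot0.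
have [lt_ks|le_sk] := ltnP k (size s); last first.
  by rewrite !rot_oversize ?size_zip -?st ?minnn // leqW.
have lt_kt : k < size t by rewrite -st.
have lt_kst : k < size (zip s t) by rewrite size_zip -st minnn.
rewrite (rotS lt_ks) (rotS lt_kt) (rotS lt_kst) -IHk.
have : size (rot k s) = size (rot k t) by rewrite !size_rot.
case: (rot k s) (rot k t) => [|x s'] [|y t'] //= [sz].
by rewrite !rot1_cons zip_rcons.
Qed.

Lemma mem_zip_swap (S T : eqType) (s : seq S) (t : seq T) x y :
  ((x, y) \in zip s t) = ((y, x) \in zip t s).
Proof.
by elim: s t => [|a s IHs] [|b t] //=; rewrite !in_cons IHs !xpair_eqE andbC.
Qed.

Lemma nth_rot (T : Type) (x0 : T) (s : seq T) k i : k <= size s -> i < size s ->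
  nth x0 (rot k s) i = nth x0 s ((i + k) %% size s).
Proof.
move=> k_le i_lt; rewrite /rot nth_cat size_drop; case: ltnP => h.
  by rewrite nth_drop modn_small; [rewrite addnC | lia].
rewrite nth_take; last by lia.
have -> : i + k = i - (size s - k) + size s by lia.
by rewrite modnDr modn_small //; lia.
Qed.

Section CyclicSequences.
Variable T : finType.
Implicit Types (s : seq T).

Definition cyc_pairs s : seq (T * T) := zip s (rot 1 s).

Lemma cyc_addn_size x0 s i : cyc x0 s (i + size s) = cyc x0 s i.
Proof. by rewrite /cyc modnDr. Qed.

Lemma cyc_rot x0 s k i : 0 < size s ->
  cyc x0 (rot k s) i = cyc x0 s (i + minn k (size s)).
Proof.
move=> s_gt0; rewrite rot_minn /cyc size_rot nth_rot ?geq_minr ?ltn_pmod //.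
by rewrite modnDml.
Qed.

Lemma cyc_pairsP x0 s u v : 0 < size s ->
  reflect (exists i, cyc x0 s i = u /\ cyc x0 s i.+1 = v) ((u, v) \in cyc_pairs s).
Proof.
move=> s_gt0; have size_pairs : size (cyc_pairs s) = size s.
  by rewrite size_zip size_rot minnn.
have pairs_nth i : i < size s ->
    nth (x0, x0) (cyc_pairs s) i = (cyc x0 s i, cyc x0 s i.+1).
  move=> i_lt; rewrite nth_zip ?size_rot // nth_rot // /cyc (modn_small i_lt).
  by rewrite addn1.
apply: (iffP idP) => [/(nthP (x0, x0))[i]|[i [<- <-]]].
  by rewrite size_pairs => i_lt; rewrite pairs_nth // => -[<- <-]; exists i.
have [<- <-] : cyc x0 s (i %% size s) = cyc x0 s i /\
                 cyc x0 s (i %% size s).+1 = cyc x0 s i.+1.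
  by rewrite /cyc modn_mod -addn1 modnDml addn1.
by rewrite -pairs_nth ?ltn_pmod // mem_nth // size_pairs ltn_pmod.
Qed.

Lemma mem_cyc_pairs_rot k s : cyc_pairs (rot k s) =i cyc_pairs s.
Proof.
by move=> p; rewrite /cyc_pairs rot_rot zip_rot ?size_rot // mem_rot.
Qed.

Lemma mem_cyc_pairs_rev s u v : ((u, v) \in cyc_pairs (rev s)) = ((v, u) \in cyc_pairs s).
Proof.
rewrite /cyc_pairs -rev_rotr -rev_zip ?size_rotr // mem_rev mem_zip_swap.
by rewrite -(mem_rot 1) -zip_rot ?size_rotr // rotrK.
Qed.

End CyclicSequences.

Section ThreeSets.
Variable T : finType.
Implicit Types (a b c d : T) (A : {set T}).

Lemma set3_rotl a b c : [set a; b; c] = [set b; c; a].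
Proof. by apply/setP => x; rewrite !inE; case: (x == a); case: (x == b); case: (x == c). Qed.

Lemma card_set3P a b c : reflect [/\ a != b, b != c & a != c] (#|[set a; b; c]| == 3).
Proof.
rewrite -setUA cardsU1 cards2 !inE negb_or.
apply: (iffP eqP); last by case=> /negPf-> /negPf-> /negPf->.
by case: (a =P b); case: (b =P c); case: (a =P c).
Qed.

Lemma subset_set3 A a b c : ([set a; b; c] \subset A) = [&& a \in A, b \in A & c \in A].
Proof. by rewrite !subUset !sub1set andbA. Qed.

Lemma card3_set3 A a b c : #|A| = 3 -> a \in A -> b \in A -> c \in A ->
  [/\ a != b, b != c & a != c] -> A = [set a; b; c].
Proof.
move=> A3 aA bA cA /card_set3P/eqP abc3; apply/eqP; rewrite eq_sym eqEcard.
by rewrite subset_set3 aA bA cA abc3 A3 leqnn.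
Qed.

Lemma card3_third A b c : #|A| = 3 -> b \in A -> c \in A -> b != c ->
  exists d, [/\ d != b, d != c & A = [set b; c; d]].
Proof.
move=> A3 bA cA bc; have /card_gt0P[d] : 0 < #|A :\: [set b; c]|.
  by rewrite cardsD A3 (setIidPr _) ?cards2 ?bc // subUset !sub1set bA cA.
rewrite !inE negb_or => /andP[/andP[db dc] dA].
by exists d; split=> //; apply: card3_set3; rewrite // ![_ == d]eq_sym.
Qed.

Lemma card3_set3_exists A : #|A| = 3 -> exists a b c, A = [set a; b; c].
Proof.
move=> A3; have /card_gt1P[a [b [aA bA ab]]] : 1 < #|A| by rewrite A3.
by have [c [_ _ ->]] := card3_third A3 aA bA ab; exists a, b, c.
Qed.

End ThreeSets.

Section Faces.
Variables (V : finType) (F : {set {set V}}).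
Hypothesis face_card : forall f, f \in F -> #|f| = 3.
Hypothesis edge_faces : forall e, is_edge F e -> #|[set f in F | e \subset f]| = 2.

Lemma face_neq a b c : [set a; b; c] \in F -> [/\ a != b, b != c & a != c].
Proof. by move=> /face_card/eqP/card_set3P. Qed.

Lemma face_edge a b c : [set a; b; c] \in F -> is_edge F [set a; b].
Proof.
move=> abcF; have [ab _ _] := face_neq abcF.
rewrite /is_edge cards2 ab; apply/exists_inP; exists [set a; b; c] => //.
by rewrite subUset !sub1set !inE !eqxx !orbT.
Qed.

Lemma face_third f a b : f \in F -> a \in f -> b \in f -> a != b ->
  exists c, f = [set a; b; c].
Proof.
by move=> fF af bf ab; have [c [_ _ ->]] := card3_third (face_card fF) af bf ab; exists c.
Qed.

Lemma face_on_edge a b c d x : [set b; c; a] \in F -> [set b; c; d] \in F -> d != a ->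
  [set b; c; x] \in F -> x = a \/ x = d.
Proof.
move=> bcaF bcdF da bcxF.
have bcE : is_edge F [set b; c] := face_edge bcaF.
have third_neq y z : [set b; c; y] \in F -> y != z -> [set b; c; y] != [set b; c; z].
  move=> /face_neq[_ cy by_] yz; apply/eqP => /setP/(_ y).
  by rewrite !inE eqxx orbT eq_sym (negPf by_) eq_sym (negPf cy) (negPf yz).
have on_bc y : [set b; c; y] \in F -> [set b; c; y] \in [set f in F | [set b; c] \subset f].
  by move=> yF; rewrite inE yF subUset !sub1set !inE !eqxx !orbT.
have [->|xa] := eqVneq x a; first by left.
have [->|xd] := eqVneq x d; first by right.
have /card_set3P/eqP : [/\ [set b; c; a] != [set b; c; d], [set b; c; d] != [set b; c; x]
                         & [set b; c; a] != [set b; c; x]].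
  by split; apply: third_neq; rewrite // eq_sym.
suff : #|[set [set b; c; a]; [set b; c; d]; [set b; c; x]]| <= 2.
  by move=> + card3; rewrite card3.
by rewrite -(edge_faces bcE) subset_leq_card // subset_set3 !on_bc.
Qed.

(* The default a is never returned: every edge lies on two faces. *)
Definition opposite (a b c : V) : V :=
  odflt a [pick d | ([set b; c; d] \in F) && (d != a)].

Lemma opposite_spec a b c : [set a; b; c] \in F ->
  [set b; c; opposite a b c] \in F /\ opposite a b c != a.
Proof.
rewrite set3_rotl => bcaF; rewrite /opposite; case: pickP => [d /andP[] //|no_opp].
have bcE : is_edge F [set b; c] := face_edge bcaF.
set S := [set f in F | [set b; c] \subset f].
have bcaS : [set b; c; a] \in S by rewrite inE bcaF subUset !sub1set !inE !eqxx !orbT.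
have /card_gt0P[g] : 0 < #|S :\ [set b; c; a]|.
  by have := cardsD1 [set b; c; a] S; rewrite bcaS edge_faces // => -[]; rewrite add0n => <-.
rewrite !inE => /andP[g_bca /andP[gF bc_g]].
have [bg cg] : b \in g /\ c \in g by rewrite -!sub1set; apply/andP; rewrite -subUset.
have [bc _ _] := face_neq bcaF; have [d gE] := face_third gF bg cg bc.
have := no_opp d; rewrite -gE gF /= => /negbFE/eqP da.
by move: g_bca; rewrite gE da eqxx.
Qed.

Lemma faces_adjacent a b c d : [set a; b; c] \in F -> [set b; c; d] \in F -> d != a ->
  adjacent_faces F [set a; b; c] [set b; c; d].
Proof.
move=> abcF bcdF da; have [ab bc ac] := face_neq abcF; have [_ cd bd] := face_neq bcdF.
have a_bcd : a \notin [set b; c; d] by rewrite !inE (negPf ab) (negPf ac) eq_sym (negPf da).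
split; first by apply: contraNneq a_bcd => <-; rewrite !inE eqxx.
have -> : [set a; b; c] :&: [set b; c; d] = [set b; c].
  apply/setP => x; rewrite !inE; have [->|xa] := eqVneq x a.
    by rewrite (negPf ab) (negPf ac) eq_sym (negPf da).
  by case: (x == b); case: (x == c).
exact: face_edge bcdF.
Qed.

Lemma zigzag_of_faces (s : seq V) (w : nat -> V) :
  0 < size s -> (forall x0 i, cyc x0 s i = w i) ->
  (forall i, [set w i; w i.+1; w i.+2] \in F) -> (forall i, w i.+3 != w i) ->
  (forall k, 0 < k < size s -> rot k s != s) -> is_zigzag F s.
Proof.
move=> s_gt0 sw wF w3 s_prim.
have face_of_edges f i : f \in F -> [set w i; w i.+1] \subset f ->
    [set w i.+1; w i.+2] \subset f -> f = [set w i; w i.+1; w i.+2].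
  rewrite !subUset !sub1set => fF /andP[wi wi1] /andP[_ wi2].
  by apply: card3_set3; rewrite ?face_card //; apply: face_neq.
split=> [|x0 i|x0 i f g fF gF|x0 i|//]; rewrite /zedge ?sw.
- by split=> // x0 i; rewrite /zedge !sw; apply: face_edge (wF i).
- have [w01 w12 w02] := face_neq (wF i); split.
    by apply: contraNneq w02 => /setP/(_ (w i)); rewrite !inE eqxx (negPf w01).
  by exists [set w i; w i.+1; w i.+2]; rewrite // !subUset !sub1set !inE !eqxx !orbT.
- move=> fi fi1 gi1 gi2.
  by rewrite (face_of_edges f i) // (face_of_edges g i.+1) //; apply: faces_adjacent.
- have [_ w12 w02] := face_neq (wF i); have [_ _ w13] := face_neq (wF i.+1).
  rewrite -setI_eq0; apply/eqP/setP => x; rewrite !inE.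
  have [->|_] := eqVneq x (w i).
    by rewrite (negPf w02) (eq_sym (w i) (w i.+3)) (negPf (w3 i)) andbF.
  by have [->|_] := eqVneq x (w i.+1); first by rewrite (negPf w12) (negPf w13).
Qed.

Definition oriented_face (t : V * V * V) : bool := [set t.1.1; t.1.2; t.2] \in F.

(* The zigzag through consecutive vertices a, b, c continues with the third
   vertex of the other face on the edge bc; iterating this injective step on
   oriented faces traces the zigzag. *)
Definition zstep (t : V * V * V) : V * V * V := (t.1.2, t.2, opposite t.1.1 t.1.2 t.2).

Lemma zstep_face t : oriented_face t -> oriented_face (zstep t).
Proof. by case: t => [[a b] c] /opposite_spec[]. Qed.

Lemma zstep_inj t t' : oriented_face t -> oriented_face t' -> zstep t = zstep t' -> t = t'.
Proof.
case: t t' => [[a b] c] [[a' b'] c']; rewrite /oriented_face /zstep /=.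
move=> abcF a'bcF [eq_b eq_c opp_eq]; subst b' c'; have [bcdF da] := opposite_spec abcF.
have [_ da'] := opposite_spec a'bcF; rewrite -opp_eq in da'.
rewrite set3_rotl in abcF; rewrite set3_rotl in a'bcF.
by case: (face_on_edge abcF bcdF da a'bcF) => [->|a'd] //; rewrite a'd eqxx in da'.
Qed.

Local Notation oface := {t : V * V * V | oriented_face t}.

Definition zstep_of (t : oface) : oface := exist _ (zstep (val t)) (zstep_face (valP t)).

Lemma zstep_of_inj : injective zstep_of.
Proof. by move=> t t' /(congr1 val)/(zstep_inj (valP t) (valP t'))/val_inj. Qed.

Section ZigzagOrbit.
Variable t0 : oface.

Definition zz_vertex (i : nat) : V := (val (iter i zstep_of t0)).1.1.

Definition zz_seq : seq V := mkseq zz_vertex (order zstep_of t0).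

Local Notation w := zz_vertex.
Local Notation n := (order zstep_of t0).

Lemma zz_triple i : val (iter i zstep_of t0) = (w i, w i.+1, w i.+2).
Proof. by rewrite /w !iterS /=; case: (val (iter i zstep_of t0)) => [[]]. Qed.

Lemma zz_face i : [set w i; w i.+1; w i.+2] \in F.
Proof. by have := valP (iter i zstep_of t0); rewrite /oriented_face zz_triple. Qed.

Lemma zz_vertex3_neq i : w i.+3 != w i.
Proof.
have [_] := opposite_spec (zz_face i).
by rewrite /w (iterS i.+2) iterS iterS /= -/(w i) zz_triple.
Qed.

Lemma zz_vertex_mod i : w (i %% n) = w i.
Proof.
have iter_period q : iter (q * n) zstep_of t0 = t0.
  by elim: q => [//|q IHq]; rewrite mulSn iterD IHq (iter_order zstep_of_inj).
by rewrite {2}(divn_eq i n) addnC /w iterD iter_period.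
Qed.

Lemma size_zz_seq : size zz_seq = n.
Proof. exact: size_mkseq. Qed.

Lemma cyc_zz_seq x0 i : cyc x0 zz_seq i = w i.
Proof. by rewrite /cyc size_zz_seq nth_mkseq ?zz_vertex_mod // ltn_pmod ?order_gt0. Qed.

Lemma zz_seq_primitive k : 0 < k < size zz_seq -> rot k zz_seq != zz_seq.
Proof.
rewrite size_zz_seq => /andP[k_gt0 k_lt]; apply/eqP => rot_k.
have w_k i : w (i + k) = w i.
  have := @cyc_rot _ (w 0) zz_seq k i; rewrite size_zz_seq (minn_idPl (ltnW k_lt)) rot_k.
  by rewrite !cyc_zz_seq => -> //; apply: order_gt0.
have : iter k zstep_of t0 = t0.
  apply: val_inj; rewrite (zz_triple k) (zz_triple 0) -(w_k 0) -(w_k 1) -(w_k 2).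
  by rewrite !addSn !add0n.
move=> /(congr1 (findex zstep_of t0)); rewrite findex_iter // findex0.
by move=> k0; rewrite k0 in k_gt0.
Qed.

Lemma zz_seq_zigzag : is_zigzag F zz_seq.
Proof.
apply: (zigzag_of_faces _ cyc_zz_seq zz_face zz_vertex3_neq zz_seq_primitive).
by rewrite size_zz_seq order_gt0.
Qed.

End ZigzagOrbit.

Lemma zigzag_through_face a b c : [set a; b; c] \in F ->
  exists s, [/\ is_zigzag F s, 0 < size s &
                forall x0, [/\ cyc x0 s 0 = a, cyc x0 s 1 = b & cyc x0 s 2 = c]].
Proof.
move=> abcF; pose t0 : oface := exist _ (a, b, c) abcF.
exists (zz_seq t0); split; first exact: zz_seq_zigzag.
  by rewrite size_zz_seq order_gt0.
by move=> x0; rewrite !cyc_zz_seq.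
Qed.

End Faces.

Section TransitionProbabilities.
Variables (V : finType) (F : {set {set V}}) (tau : seq (seq V)).
Local Open Scope ring_scope.

Lemma ptrans_ge0 u v : 0 <= ptrans F tau u v.
Proof. by rewrite /ptrans; do 2?case: ifP => _; rewrite ?divr_ge0 ?ler0n. Qed.

Lemma zdeg_gt0 u v : typeI F tau u v || typeII F tau u v -> (0 < zdeg F tau u)%N.
Proof.
rewrite /zdeg addn_gt0 muln_gt0 /= => /orP[uvI|uvII]; apply/orP; [left|right];
  by apply/card_gt0P; exists v; rewrite inE.
Qed.

Lemma ptrans_gt0P u v :
  0 < ptrans F tau u v <-> is_edge F [set u; v] /\ (0 < trav tau u v)%N.
Proof.
have zdeg_pos := @zdeg_gt0 u v; rewrite /ptrans.
case: ifP => [uvI|uvI]; last case: ifP => [uvII|uvII].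
- by move: (uvI) => /and3P[]; rewrite divr_gt0 ?ltr0n ?zdeg_pos ?uvI.
- by move: (uvII) => /and3P[]; rewrite divr_gt0 ?ltr0n ?zdeg_pos ?uvII ?orbT.
- rewrite ltxx; split=> // -[uvE uv_gt0].
  by move: uvI uvII; rewrite /typeI /typeII uvE uv_gt0 lt0n; case: eqP.
Qed.

Lemma trav_gt0P u v :
  reflect (exists2 t, t \in tau & (u, v) \in cyc_pairs t) (0 < trav tau u v)%N.
Proof.
rewrite /trav; elim: tau => [|t tau' IHtau]; first by rewrite big_nil; right; case.
rewrite big_cons addn_gt0 -has_count has_pred1.
apply: (iffP orP) => [[uv_t|/IHtau[t' t'_tau uv_t']]|[t' /[!inE]/orP[/eqP-> | t'_tau] uv_t']].
- by exists t; rewrite ?mem_head.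
- by exists t'; rewrite // inE t'_tau orbT.
- by left.
- by right; apply/IHtau; exists t'.
Qed.

End TransitionProbabilities.

Section TransitionDigraph.
Variables (V : finType) (F : {set {set V}}) (tau : seq (seq V)).
Hypothesis tri : triangulation F.
Hypothesis z_tau : z_orientation F tau.

Local Notation zarc := (trans_rel (ptrans F tau)).

Let face_card : forall f, f \in F -> #|f| = 3.
Proof. by case: tri => -[]. Qed.

Let edge_faces : forall e, is_edge F e -> #|[set f in F | e \subset f]| = 2.
Proof. by case: tri. Qed.

Lemma tau_zigzag t : t \in tau -> is_zigzag F t.
Proof. by case: z_tau => tau_zz _ _ _; apply: tau_zz. Qed.

Lemma tau_size_gt0 t : t \in tau -> 0 < size t.
Proof. by move/tau_zigzag => [[]]. Qed.

Lemma zarc_cyc_pair t u v : t \in tau -> (u, v) \in cyc_pairs t -> zarc u v.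
Proof.
move=> t_tau uv_t; apply/ptrans_gt0P; split; last by apply/trav_gt0P; exists t.
have [[_ t_edge] _ _ _ _] := tau_zigzag t_tau.
have /(cyc_pairsP u _ _ (tau_size_gt0 t_tau)) [i [ui vi]] := uv_t.
by rewrite -ui -vi; apply: t_edge.
Qed.

Lemma zigzag_connect t x0 i m : t \in tau ->
  connect zarc (cyc x0 t i) (cyc x0 t (i + m)).
Proof.
move=> t_tau; elim: m => [|m IHm]; first by rewrite addn0.
apply: connect_trans IHm (connect1 _); rewrite addnS.
by apply: (zarc_cyc_pair t_tau); apply/cyc_pairsP; [exact: tau_size_gt0 | exists (i + m)].
Qed.

Lemma zarc_connect_back u v : zarc u v -> connect zarc v u.
Proof.
case/ptrans_gt0P => _ /trav_gt0P[t t_tau uv_t].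
have /(cyc_pairsP u _ _ (tau_size_gt0 t_tau)) [i [ui vi]] := uv_t.
rewrite -ui -vi; have := zigzag_connect u i.+1 (size t).-1 t_tau.
by rewrite addSn -addnS prednK ?tau_size_gt0 // cyc_addn_size.
Qed.

Lemma face_zarcs a b c : [set a; b; c] \in F ->
  (zarc a b /\ zarc b c) \/ (zarc c b /\ zarc b a).
Proof.
move=> abcF; have [s [s_zz s_gt0 s_abc]] := zigzag_through_face face_card edge_faces abcF.
have [ab_s bc_s] : (a, b) \in cyc_pairs s /\ (b, c) \in cyc_pairs s.
  by have [sa sb sc] := s_abc a; split; apply/(cyc_pairsP a) => //; [exists 0 | exists 1].
case: z_tau => _ _ _ /(_ s s_zz) [[[t t_tau [k rot_t]]|[t t_tau [k rot_t]]] _].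
- by left; split; apply: (zarc_cyc_pair t_tau); rewrite -(mem_cyc_pairs_rot k) rot_t.
- right; split; apply: (zarc_cyc_pair t_tau).
    by rewrite -(mem_cyc_pairs_rot k) rot_t mem_cyc_pairs_rev.
  by rewrite -(mem_cyc_pairs_rot k) rot_t mem_cyc_pairs_rev.
Qed.

Lemma adj_connect u v : adj F u v -> connect zarc u v.
Proof.
rewrite /adj /is_edge cards2 eqSS eqb1 => /andP[uv /exists_inP[f fF uv_f]].
have [uf vf] : u \in f /\ v \in f by rewrite -!sub1set; apply/andP; rewrite -subUset.
have [w f_uvw] := face_third face_card fF uf vf uv.
rewrite f_uvw in fF; case: (face_zarcs fF) => [[u_v _]|[_ v_u]].
  exact: connect1.
exact: zarc_connect_back.
Qed.

Lemma connect_zarc u v : connect zarc u v.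
Proof. by case: tri => _ _ _ _ /(_ u v); apply: connect_sub; apply: adj_connect. Qed.

Lemma zarc_cycle3 : exists a, walk zarc 3 a a.
Proof.
case: tri => -[/set0Pn[f fF] _] _ _ _ _.
have [a [b [c f_abc]]] := card3_set3_exists (face_card fF); rewrite f_abc in fF.
have bcaF : [set b; c; a] \in F by rewrite -set3_rotl.
have cabF : [set c; a; b] \in F by rewrite -set3_rotl.
have cycle3 x y z : zarc x y -> zarc y z -> zarc z x -> exists a, walk zarc 3 a a.
  by move=> xy yz zx; exists x, [:: y; z; x]; rewrite /= xy yz zx.
case: (face_zarcs fF) => -[? ?]; case: (face_zarcs bcaF) => -[? ?];
  case: (face_zarcs cabF) => -[? ?]; by [apply: (cycle3 a b c) | apply: (cycle3 a c b)].
Qed.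

End TransitionDigraph.

Local Open Scope ring_scope.

Theorem proposition2 (V : finType) (F : {set {set V}}) (tau : seq (seq V)) :
  triangulation F -> z_orientation F tau ->
  [<-> aperiodic (ptrans F tau);
       ergodic (ptrans F tau);
       exists (x : V) (p : seq V),
         [/\ path (fun a b => 0 < ptrans F tau a b) x p,
             last x p = x
           & ~~ (3 %| size p)%N]].
Proof.
move=> tri z_tau; have P_ge0 := @ptrans_ge0 V F tau.
have conn := connect_zarc tri z_tau; have [a cycle3_a] := zarc_cycle3 tri z_tau.
tfae=> [aper|[_ aper]|[x [p [x_p p_x p_ndvd3]]]].
- by split=> //; apply: irreducible_connect.
- have [n [[p [a_p p_a <-]] n_ndvd3]] :=
    aperiodic_cycle_ndvd P_ge0 a aper (isT : (3 != 1)%N).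
  by exists a, p.
- apply: (aperiodic_coprime_cycles P_ge0 conn cycle3_a (_ : walk _ (size p) x x)).
    by exists p.
  by rewrite prime_coprime.
Qed.
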